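(* Suppose $(\mu^{(n)}_t,\nu^{(n)}_t)_{t\ge0}$, $n\in\mathbb N$, are processes in $D_{[0,\infty)}(\mathcal M_{\mathrm{tem}}(\mathbb R)^2)$ (resp. $D_{[0,\infty)}(\mathcal M_{\mathrm{rap}}(\mathbb R)^2)$) converging weakly, with respect to the Meyer–Zheng topology, to $(\mu_t,\nu_t)_{t\ge0}$, and suppose that $\mathbb P[R(\mu^{(n)}_t)\le L(\nu^{(n)}_t)\text{ for all }t>0,n\in\mathbb N]=1$. Then $\mathbb P[R(\mu_t)\le L(\nu_t)\text{ for all }t>0]=1$.
   Context: $\phi_\lambda(x)=e^{-\lambda|x|}$. $\mathcal M_{\mathrm{tem}}(\mathbb R)$: nonnegative Radon measures with $\int\phi_\lambda d\mu<\infty$ for all $\lambda>0$, with $\mu_n\to\mu$ iff $\int\varphi d\mu_n\to\int\varphi d\mu$ for every continuous $\varphi$ with, for some $\lambda>0$, $\sup|\varphi|/\phi_\lambda<\infty$ and $\varphi/\phi_\lambda$ having finite limits at $\pm\infty$; $\mathcal M_{\mathrm{rap}}(\mathbb R)$: those with $\int\phi_{-\lambda}d\mu<\infty$ for all $\lambda>0$, with $\mu_n\to\mu$ iff weak convergence and $\sup_n\int\phi_{-\lambda}d\mu_n<\infty$ for all $\lambda>0$. $D_{[0,\infty)}(E)$ is the space of càdlàg paths; the Meyer–Zheng topology on it is induced by weak convergence of pseudo-paths (the images of $e^{-t}dt$ under $t\mapsto(t,w(t))$), equivalently convergence in Lebesgue measure. ${\rm supp}(\mu)=\{x:\mu(B_\varepsilon(x))>0\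 \forall\varepsilon>0\}$, $R(\mu)=\sup{\rm supp}(\mu)$, $L(\mu)=\inf{\rm supp}(\mu)$ in $\bar{\mathbb R}$. *)

From HB Require Import structures.
From mathcomp Require Import all_boot all_order all_algebra.
From mathcomp Require Import all_classical all_reals all_analysis.
Set Implicit Arguments. Unset Strict Implicit. Unset Printing Implicit Defensive.
Import Order.TTheory GRing.Theory Num.Theory.
Import numFieldNormedType.Exports.
Local Open Scope classical_set_scope.
Local Open Scope ring_scope.

Section Defs.
Variable R : realType.

Definition Meas := {measure set R -> \bar R}.

Definition phil (lam x : R) : R := expR (- (lam * `|x|)).

Definition Mtem (mu : Meas) : Prop :=
  (forall a b : R, mu `[a, b]%classic < +oo)%E /\
  (forall lam : R, 0 < lam -> (\int[mu]_x (phil lam x)%:E < +oo)%E).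

Definition Mrap (mu : Meas) : Prop :=
  forall lam : R, 0 < lam -> (\int[mu]_x (phil (- lam) x)%:E < +oo)%E.

Definition tem_test (f : R -> R) : Prop :=
  continuous f /\
  exists lam : R, 0 < lam /\
    (exists M : R, forall x, `|f x| <= M * phil lam x) /\
    (exists l : R, (fun x => f x / phil lam x) @ +oo --> l) /\
    (exists l : R, (fun x => f x / phil lam x) @ -oo --> l).

Definition tem_conv (mus : nat -> Meas) (mu : Meas) : Prop :=
  forall f, tem_test f ->
    (fun n => (\int[mus n]_x (f x)%:E)%E) @ \oo --> (\int[mu]_x (f x)%:E)%E.

Definition bcont (f : R -> R) : Prop :=
  continuous f /\ exists M : R, forall x, `|f x| <= M.

Definition rap_conv (mus : nat -> Meas) (mu : Meas) : Prop :=
  (forall f, bcont f ->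
    (fun n => (\int[mus n]_x (f x)%:E)%E) @ \oo --> (\int[mu]_x (f x)%:E)%E) /\
  (forall lam : R, 0 < lam -> exists C : R,
     forall n, (\int[mus n]_x (phil (- lam) x)%:E <= C%:E)%E).

Definition Mspace (sp : bool) : Meas -> Prop := if sp then Mrap else Mtem.
Definition Mconv (sp : bool) : (nat -> Meas) -> Meas -> Prop :=
  if sp then rap_conv else tem_conv.

Definition Espace sp (x : Meas * Meas) : Prop := Mspace sp x.1 /\ Mspace sp x.2.
Definition Econv sp (xs : nat -> Meas * Meas) (x : Meas * Meas) : Prop :=
  Mconv sp (fun k => (xs k).1) x.1 /\ Mconv sp (fun k => (xs k).2) x.2.

(* paths are functions of time t : R, only t >= 0 matters *)
Definition mpath := R -> Meas * Meas.

Definition cadlag sp (w : mpath) : Prop :=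
  (forall t : R, 0 <= t -> Espace sp (w t)) /\
  (forall t : R, 0 <= t -> forall s : nat -> R,
     (forall k, t <= s k) -> s @ \oo --> t -> Econv sp (fun k => w (s k)) (w t)) /\
  (forall t : R, 0 < t -> exists x, Espace sp x /\
     forall s : nat -> R, (forall k, 0 <= s k < t) -> s @ \oo --> t ->
       Econv sp (fun k => w (s k)) x).

Definition bcontE sp (F : R -> Meas * Meas -> R) : Prop :=
  (exists C : R, forall t x, 0 <= t -> Espace sp x -> `|F t x| <= C) /\
  (forall (t : R) (x : Meas * Meas) (ts : nat -> R) (xs : nat -> Meas * Meas),
     0 <= t -> Espace sp x -> (forall k, 0 <= ts k /\ Espace sp (xs k)) ->
     ts @ \oo --> t -> Econv sp xs x ->
     (fun k => F (ts k) (xs k)) @ \oo --> F t x).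

(* integral of F against the pseudo-mpath of w
   (image of e^{-t}dt on [0,oo) under t |-> (t, w t)) *)
Definition pseudo_int (F : R -> Meas * Meas -> R) (w : mpath) : \bar R :=
  (\int[lebesgue_measure]_(t in [set t : R | (0 <= t)%R]) ((F t (w t) * expR (- t))%R)%:E)%E.

(* Meyer-Zheng convergence: weak convergence of pseudo-paths *)
Definition MZconv sp (ws : nat -> mpath) (w : mpath) : Prop :=
  forall F, bcontE sp F ->
    (fun k => pseudo_int F (ws k)) @ \oo --> pseudo_int F w.

Definition MZbcont sp (G : mpath -> R) : Prop :=
  (exists C : R, forall w, cadlag sp w -> `|G w| <= C) /\
  (forall (ws : nat -> mpath) w, (forall k, cadlag sp (ws k)) -> cadlag sp w ->
     MZconv sp ws w -> (fun k => G (ws k)) @ \oo --> G w).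

(* a random element of D_[0,oo)(E) (Borel sigma-algebra of the MZ topology) *)
Definition Dprocess sp d (T : measurableType d) (X : T -> mpath) : Prop :=
  (forall om, cadlag sp (X om)) /\
  (forall G, MZbcont sp G -> measurable_fun setT (fun om => G (X om))).

Definition MZweak_conv sp d (T : measurableType d) (P : probability T R)
    (Xs : nat -> T -> mpath) (X : T -> mpath) : Prop :=
  forall G, MZbcont sp G ->
    (fun n => (\int[P]_om (G (Xs n om))%:E)%E) @ \oo --> (\int[P]_om (G (X om))%:E)%E.

(* support, R(mu) = sup supp, L(mu) = inf supp in extended reals *)
Definition supp (mu : Meas) : set R :=
  [set x : R | forall e : R, 0 < e -> (0 < mu (`](x - e)%R, (x + e)%R[%classic : set R))%E].
Definition Rsup (mu : Meas) : \bar R := ereal_sup [set x%:E | x in supp mu].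
Definition Linf (mu : Meas) : \bar R := ereal_inf [set x%:E | x in supp mu].

Definition RL_ordered (w : mpath) : Prop :=
  forall t : R, 0 < t -> (Rsup (w t).1 <= Linf (w t).2)%E.

End Defs.

From HB Require Import structures.
From mathcomp Require Import all_boot all_order all_algebra.
From mathcomp Require Import all_classical all_reals all_analysis.
From mathcomp Require Import measurable_realfun lra.
Import Order.TTheory GRing.Theory Num.Theory.
Import numFieldNormedType.Exports.
Local Open Scope classical_set_scope.
Local Open Scope ring_scope.

(* Fix a rational c. Damping the ramps y |-> clamp01 (y - c) and
   y |-> clamp01 (c - y) by phi_1 gives test functions of both topologies, so
   overlap c (mu, nu), the product of the truncated integrals of the first
   against mu and of the second against nu, is bounded and continuous on the
   state space; it is positive iff supp mu meets (c, +oo) and supp nu meets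
   (-oo, c).  Hence R(mu) <= L(nu) iff overlap c (mu, nu) = 0 for every
   rational c.  Integrating overlap c along the pseudo-path yields a bounded
   Meyer-Zheng continuous functional of the path: it vanishes on the ordered
   paths of X^n, so its expectation vanishes for every X^n and, by weak
   convergence, for X.  Being nonnegative it vanishes a.s., and by right
   continuity of X an integral over time equal to zero forces overlap c (X_t)
   = 0 for every t; a countable intersection over c concludes. *)

Section measure_complements.
Local Open Scope ereal_scope.
Context {d} {T : measurableType d} {R : realType}.
Implicit Type mu : {measure set T -> \bar R}.

Lemma ae_forall_countable {I : countType} {mu} {Q : I -> T -> Prop} :
  (forall i, \forall x \ae mu, Q i x) -> \forall x \ae mu, forall i, Q i x.
Proof.
move=> Qae.
have : \forall x \ae mu, forall n, oapp (fun i => Q i x) True (unpickle n).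
  by apply: ae_foralln => n; case: (unpickle n) => [i|]; [exact: Qae|exact: aeW].
by apply: filterS => x Qx i; have := Qx (pickle i); rewrite pickleK.
Qed.

Lemma ae_probabilityP (P : probability T R) (Q : T -> Prop) :
  (exists A, measurable A /\ P A = 1 /\ forall x, A x -> Q x) <->
  \forall x \ae P, Q x.
Proof.
split=> [[A [mA [PA1 AQ]]]|[N [mN PN0 NQ]]].
  exists (~` A); split; first exact: measurableC.
    by rewrite probability_setC // PA1 subee.
  by move=> x /= nQx Ax; exact/nQx/AQ.
exists (~` N); split; first exact: measurableC.
split; first by rewrite probability_setC // PN0 sube0.
by move=> x nNx; apply: contrapT => nQx; exact/nNx/NQ.
Qed.

Lemma ge0_integral_eq0_ae mu (f : T -> R) :
  measurable_fun setT f -> (forall x, 0 <= f x)%R ->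
  \int[mu]_x (f x)%:E = 0 -> \forall x \ae mu, f x = 0%R.
Proof.
move=> mf f0 intf0.
have : ae_eq mu setT (fun x => (f x)%:E) (cst 0).
  apply/ae_eq_integral_abs => //; first exact/measurable_EFinP.
  by rewrite -intf0; apply: eq_integral => x _; rewrite gee0_abs // lee_fin.
by apply: filterS => x /(_ I) [].
Qed.

Lemma integral_gt0_measure_gt0 mu (f : T -> R) (S : set T) :
  measurable S -> measurable_fun setT f -> (forall x, 0 <= f x)%R ->
  (forall x, ~ S x -> f x = 0%R) -> 0 < \int[mu]_x (f x)%:E -> 0 < mu S.
Proof.
move=> mS mf f0 fS; apply: contraTT.
rewrite lt_neqAle measure_ge0 andbT negbK eq_sym => /eqP muS0.
rewrite -leNgt (ge0_negligible_integral _ _ _ _ muS0) //; last first.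
- by move=> x _; rewrite lee_fin.
- exact/measurable_EFinP.
by rewrite integral0_eq // => x [_ nSx]; rewrite fS.
Qed.

(* No measurability is assumed: the integral of a nonnegative function is the
   supremum of the integrals of the simple functions below it. *)
Lemma ge0_le_integral_subset mu (A B : set T) (f g : T -> \bar R) :
  (forall x, A x -> 0 <= f x) -> (forall x, B x -> 0 <= g x) ->
  (forall x, A x -> B x /\ f x <= g x) ->
  \int[mu]_(x in A) f x <= \int[mu]_(x in B) g x.
Proof.
move=> f0 g0 fg; rewrite ge0_integralE // ge0_integralE //.
apply: le_ereal_sup => _ [h hf <-]; exists h => //= x.
apply: le_trans (hf x) _; rewrite /patch; case: ifPn => [/set_mem Ax|_].
  by have [Bx fgx] := fg _ Ax; rewrite (mem_set Bx).
by case: ifPn => // /set_mem /g0.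
Qed.

End measure_complements.

Section support.
Local Open Scope ereal_scope.
Context {R : realType}.
Implicit Type mu : Meas R.

(* Outside the support, [x] lies in a null rational interval; there are
   countably many of these. *)
Lemma ae_supp mu : \forall x \ae mu, supp mu x.
Proof.
pose Q (pq : rat * rat) (x : R) :=
  mu `](ratr pq.1 : R), ratr pq.2[%classic = 0 -> ~ (ratr pq.1 < x < ratr pq.2)%R.
have : \forall x \ae mu, forall pq, Q pq x.
  apply: ae_forall_countable => -[p q]; rewrite /Q /=.
  have [mu0|mu_neq0] := eqVneq (mu `](ratr p : R), ratr q[%classic) 0; last first.
    by apply: aeW => x /eqP; rewrite (negbTE mu_neq0).
  exists `](ratr p : R), ratr q[%classic; split => // x /= /not_implyP[_].
  by move/contrapT; rewrite in_itv.
apply: filterS => x Qx e e0.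
rewrite lt_neqAle measure_ge0 andbT eq_sym; apply/eqP => mue0.
have /rat_in_itvoo[p] : (x - e < x)%R by rewrite gtrBl.
have /rat_in_itvoo[q] : (x < x + e)%R by rewrite ltrDl.
rewrite !in_itv /= => /andP[xq qe] /andP[ep px].
apply: (Qx (p, q)); last by rewrite /= px xq.
apply/eqP; rewrite -measure_le0 -mue0; apply: le_measure; rewrite ?inE //=.
move=> y /=; rewrite !in_itv /= => /andP[py yq].
by rewrite (lt_trans ep py) (lt_trans yq qe).
Qed.

Lemma measure_gt0_supp mu (S : set R) :
  measurable S -> 0 < mu S -> exists2 x, S x & supp mu x.
Proof.
move=> mS muS; apply: contrapT => noS.
have [N [mN muN0 suppN]] := ae_supp mu.
suff : mu S <= 0 by rewrite leNgt muS.
rewrite -muN0; apply: le_measure; rewrite ?inE // => x Sx.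
by apply: suppN => sx; apply: noS; exists x.
Qed.

Lemma supp_integral_gt0 mu (f : R -> R) (x e k : R) :
  (forall y, 0 <= f y)%R -> (0 < e)%R -> (0 < k)%R ->
  (forall y, x - e < y < x + e -> k <= f y)%R -> supp mu x ->
  0 < \int[mu]_y (f y)%:E.
Proof.
move=> f0 e0 k0 fk sx; set B := `](x - e)%R, (x + e)%R[%classic.
apply: (@lt_le_trans _ _ (\int[mu]_(y in B) (cst k%:E) y)).
  rewrite integral_cst; last exact: measurable_itv.
  by apply: (@mule_gt0 _ k%:E); [rewrite lte_fin|exact: sx].
apply: ge0_le_integral_subset => [y _|y _|y]; rewrite ?lee_fin ?(ltW k0) //.
by rewrite /B /= in_itv /= => /fk.
Qed.

Lemma Rsup_le_LinfP mu nu :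
  Rsup mu <= Linf nu <-> (forall x y, supp mu x -> supp nu y -> (x <= y)%R).
Proof.
split=> [ord x y sx sy|le_supp].
  rewrite -lee_fin; apply: le_trans (le_trans _ ord) _.
    by apply: ereal_sup_ubound; exists x.
  by apply: ereal_inf_lbound; exists y.
apply/ereal_supP => _ [x sx <-]; apply/ereal_infP => _ [y sy <-].
by rewrite lee_fin le_supp.
Qed.

End support.

Section test_functions.
Context {R : realType}.
Implicit Types (c x y z : R) (mu : Meas R).

Definition clamp01 z : R := Num.min (Num.max z 0) 1.

Lemma clamp01_ge0 z : 0 <= clamp01 z.
Proof. by rewrite le_min ler01 andbT le_max lexx orbT. Qed.

Lemma clamp01_le1 z : clamp01 z <= 1.
Proof. by rewrite ge_min lexx orbT. Qed.

Lemma clamp01_eq0 z : z <= 0 -> clamp01 z = 0.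
Proof. by move=> z0; rewrite /clamp01 max_r // min_l // ler01. Qed.

Lemma clamp01_ge0E z : 0 <= z -> clamp01 z = Num.min z 1.
Proof. by move=> z0; rewrite /clamp01 max_l. Qed.

Lemma clamp01_eq1 z : 1 <= z -> clamp01 z = 1.
Proof. by move=> z1; rewrite clamp01_ge0E ?min_r // (le_trans ler01). Qed.

Lemma continuous_clamp01 : continuous clamp01.
Proof.
have max0 : continuous (fun z : R => Num.max z 0).
  by apply: (@max_fun_continuous _ _ R id (cst 0)) => x; [exact: cvg_id|exact: cvg_cst].
by apply: (@min_fun_continuous _ _ R _ (cst 1) max0) => x; exact: cvg_cst.
Qed.

Lemma phil_gt0 (lam x : R) : 0 < phil lam x.
Proof. exact: expR_gt0. Qed.

Lemma phil_le1 (lam x : R) : 0 <= lam -> phil lam x <= 1.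
Proof. by move=> lam0; rewrite /phil expR_le1 oppr_le0 mulr_ge0. Qed.

Lemma continuous_phil (lam : R) : continuous (phil lam).
Proof.
move=> x; apply: continuous_comp; last exact: continuous_expR.
apply: continuousN; apply: continuousM; first exact: cvg_cst.
exact: norm_continuous.
Qed.

Definition damp (k : R -> R) x : R := phil 1 x * k x.

Section damp.
Variable k : R -> R.
Hypothesis k_cont : continuous k.
Hypothesis k_bounded : exists M, forall x, `|k x| <= M.

Lemma continuous_damp : continuous (damp k).
Proof. by move=> x; apply: continuousM; [exact: continuous_phil|exact: k_cont]. Qed.

Lemma bcont_damp : bcont (damp k).
Proof.
split; first exact: continuous_damp.
have [M kM] := k_bounded; exists M => x.
rewrite normrM ger0_norm ?(ltW (phil_gt0 _ _)) //.
by rewrite (le_trans _ (kM x)) // ler_piMl // phil_le1.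
Qed.

Lemma tem_test_damp :
  (exists l : R, (fun x => k x) @ +oo --> l) ->
  (exists l : R, (fun x => k x) @ -oo --> l) -> tem_test (damp k).
Proof.
move=> kpinfty kninfty; split; first exact: continuous_damp.
exists 1; split; first exact: ltr01.
have -> : (fun x => damp k x / phil 1 x) = k.
  by apply: funext => x; rewrite /damp mulrC mulKf // gt_eqF // phil_gt0.
split=> //; have [M kM] := k_bounded; exists M => x.
rewrite /damp normrM ger0_norm ?(ltW (phil_gt0 _ _)) // mulrC.
by rewrite ler_wpM2r // ltW // phil_gt0.
Qed.

End damp.

Definition right_bump c : R -> R := damp (fun y => clamp01 (y - c)).
Definition left_bump c : R -> R := damp (fun y => clamp01 (c - y)).

Lemma right_bump_ge0 c y : 0 <= right_bump c y.
Proof. by rewrite mulr_ge0 ?clamp01_ge0 // ltW // phil_gt0. Qed.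

Lemma left_bump_ge0 c y : 0 <= left_bump c y.
Proof. by rewrite mulr_ge0 ?clamp01_ge0 // ltW // phil_gt0. Qed.

Lemma continuous_clamp01_subr c : continuous (fun y => clamp01 (y - c)).
Proof.
move=> x; apply: (@continuous_comp _ _ _ (fun y => y - c) clamp01 x).
  2: exact: continuous_clamp01.
by apply: continuousB; [exact: cvg_id|exact: cvg_cst].
Qed.

Lemma continuous_clamp01_subl c : continuous (fun y => clamp01 (c - y)).
Proof.
move=> x; apply: (@continuous_comp _ _ _ (fun y => c - y) clamp01 x).
  2: exact: continuous_clamp01.
by apply: continuousB; [exact: cvg_cst|exact: cvg_id].
Qed.

Lemma clamp01_bounded (g : R -> R) : exists M, forall x, `|clamp01 (g x)| <= M.
Proof. by exists 1 => x; rewrite ger0_norm ?clamp01_ge0 ?clamp01_le1. Qed.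

Lemma bcont_right_bump c : bcont (right_bump c).
Proof. by apply: bcont_damp; [exact: continuous_clamp01_subr|exact: clamp01_bounded]. Qed.

Lemma bcont_left_bump c : bcont (left_bump c).
Proof. by apply: bcont_damp; [exact: continuous_clamp01_subl|exact: clamp01_bounded]. Qed.

Lemma tem_test_right_bump c : tem_test (right_bump c).
Proof.
apply: tem_test_damp; [exact: continuous_clamp01_subr|exact: clamp01_bounded| |].
- exists 1; apply: cvg_near_cst; near=> y; apply: clamp01_eq1.
  by rewrite lerBrDr; apply/ltW; near: y; apply: nbhs_pinfty_gt; exact: num_real.
- exists 0; apply: cvg_near_cst; near=> y; apply: clamp01_eq0.
  by rewrite subr_le0; apply/ltW; near: y; apply: nbhs_ninfty_lt; exact: num_real.
Unshelve. all: by end_near.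
Qed.

Lemma tem_test_left_bump c : tem_test (left_bump c).
Proof.
apply: tem_test_damp; [exact: continuous_clamp01_subl|exact: clamp01_bounded| |].
- exists 0; apply: cvg_near_cst; near=> y; apply: clamp01_eq0.
  by rewrite subr_le0; apply/ltW; near: y; apply: nbhs_pinfty_gt; exact: num_real.
- exists 1; apply: cvg_near_cst; near=> y; apply: clamp01_eq1.
  by rewrite lerBrDr -lerBrDl; apply/ltW; near: y; apply: nbhs_ninfty_lt; exact: num_real.
Unshelve. all: by end_near.
Qed.

Lemma phil1_clamp01_ge x e y a : 0 < e -> e <= a -> x - e < y < x + e ->
  expR (- (`|x| + e)) * Num.min e 1 <= phil 1 y * clamp01 a.
Proof.
move=> e0 ea /andP[y1 y2]; apply: ler_pM.
- exact/ltW/expR_gt0.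
- by rewrite le_min ler01 ltW.
- rewrite /phil ler_expR mul1r lerN2 -[y](subrK x) addrC.
  apply: le_trans (ler_normD _ _) _; rewrite lerD2l ltW // ltr_norml.
  by apply/andP; split; lra.
- by rewrite clamp01_ge0E ?(le_trans (ltW e0)) // le_min !ge_min ea lexx !orbT.
Qed.

Lemma right_bump_integral_gt0P c mu :
  (0 < \int[mu]_y (right_bump c y)%:E)%E <-> exists2 x, c < x & supp mu x.
Proof.
split=> [intf|[x cx sx]].
  have : (0 < mu `]c, +oo[%classic)%E.
    apply: (@integral_gt0_measure_gt0 _ _ _ mu (right_bump c)) intf => //.
    - exact: continuous_measurable_fun (bcont_right_bump c).1.
    - exact: right_bump_ge0.
    - move=> y; rewrite /= in_itv /= andbT => /negP; rewrite -leNgt => yc.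
      by rewrite /right_bump /damp clamp01_eq0 ?mulr0 // subr_le0.
  case/measure_gt0_supp => // x; rewrite /= in_itv /= andbT.
  by exists x.
pose e := (x - c) / 2.
have e0 : 0 < e by rewrite /e; lra.
apply: (@supp_integral_gt0 _ mu _ x e (expR (- (`|x| + e)) * Num.min e 1)
  (@right_bump_ge0 c) e0 _ _ sx).
  by rewrite mulr_gt0 ?expR_gt0 // lt_min e0 ltr01.
move=> y /andP[y1 y2]; apply: phil1_clamp01_ge; rewrite ?y1 ?y2 //.
by rewrite /e in y1 *; lra.
Qed.

Lemma left_bump_integral_gt0P c mu :
  (0 < \int[mu]_y (left_bump c y)%:E)%E <-> exists2 x, x < c & supp mu x.
Proof.
split=> [intf|[x xc sx]].
  have : (0 < mu `]-oo, c[%classic)%E.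
    apply: (@integral_gt0_measure_gt0 _ _ _ mu (left_bump c)) intf => //.
    - exact: continuous_measurable_fun (bcont_left_bump c).1.
    - exact: left_bump_ge0.
    - move=> y; rewrite /= in_itv /= => /negP; rewrite -leNgt => cy.
      by rewrite /left_bump /damp clamp01_eq0 ?mulr0 // subr_le0.
  by case/measure_gt0_supp => // x; rewrite /= in_itv /=; exists x.
pose e := (c - x) / 2.
have e0 : 0 < e by rewrite /e; lra.
apply: (@supp_integral_gt0 _ mu _ x e (expR (- (`|x| + e)) * Num.min e 1)
  (@left_bump_ge0 c) e0 _ _ sx).
  by rewrite mulr_gt0 ?expR_gt0 // lt_min e0 ltr01.
move=> y /andP[y1 y2]; apply: phil1_clamp01_ge; rewrite ?y1 ?y2 //.
by rewrite /e in y2 *; lra.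
Qed.

End test_functions.

Section overlap.
Local Open Scope ereal_scope.
Context {R : realType}.
Implicit Types (c : R) (y : \bar R) (mu nu : Meas R) (w : mpath R).

Definition trunc1 (y : \bar R) : R := fine (mine y 1%E).

Lemma fin_num_min1 y : 0 <= y -> mine y 1 \is a fin_num.
Proof.
move=> y0; rewrite ge0_fin_numE ?le_min ?y0 ?lee01 //.
by rewrite (@le_lt_trans _ _ 1) ?ltey // ge_min lexx orbT.
Qed.

Lemma trunc1_ge0 y : 0 <= y -> (0 <= trunc1 y)%R.
Proof. by move=> y0; rewrite /trunc1 fine_ge0 // le_min y0 lee01. Qed.

Lemma trunc1_le1 y : 0 <= y -> (trunc1 y <= 1)%R.
Proof. by move=> y0; rewrite -lee_fin fineK ?fin_num_min1 // ge_min lexx orbT. Qed.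

Lemma trunc1_gt0 y : 0 <= y -> (0 < trunc1 y)%R = (0 < y).
Proof. by move=> y0; rewrite -lte_fin fineK ?fin_num_min1 // lt_min lte01 andbT. Qed.

Lemma trunc1_eq0 y : 0 <= y -> (trunc1 y == 0%R) = (y == 0).
Proof.
move=> y0; have := trunc1_gt0 _ y0.
by rewrite !lt_neqAle trunc1_ge0 // y0 !andbT !(eq_sym 0%R) => /negb_inj.
Qed.

Lemma trunc1_cvg (u : nat -> \bar R) y : 0 <= y ->
  u n @[n --> \oo] --> y -> trunc1 (u n) @[n --> \oo] --> trunc1 y.
Proof.
move=> y0 uy; apply: (@fine_cvg _ _ _ _ (fun n => mine (u n) 1%E)).
rewrite /trunc1 fineK ?fin_num_min1 //.
apply: (@continuous2_cvg _ _ _ _ _ _ u (cst 1%E) mine y 1%E) => //.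
  exact: (@min_continuous _ (\bar R) (y, 1%E)).
exact: cvg_cst.
Qed.

Lemma integral_right_bump_ge0 c mu : 0 <= \int[mu]_y (right_bump c y)%:E.
Proof. by apply: integral_ge0 => y _; rewrite lee_fin right_bump_ge0. Qed.

Lemma integral_left_bump_ge0 c mu : 0 <= \int[mu]_y (left_bump c y)%:E.
Proof. by apply: integral_ge0 => y _; rewrite lee_fin left_bump_ge0. Qed.

Definition overlap c (x : Meas R * Meas R) : R :=
  trunc1 (\int[x.1]_y (right_bump c y)%:E) * trunc1 (\int[x.2]_y (left_bump c y)%:E).

Lemma overlap_ge0 c x : (0 <= overlap c x)%R.
Proof.
by rewrite mulr_ge0 // trunc1_ge0 // ?integral_right_bump_ge0 ?integral_left_bump_ge0.
Qed.

Lemma overlap_le1 c x : (overlap c x <= 1)%R.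
Proof.
rewrite mulr_ile1 // ?trunc1_ge0 ?trunc1_le1 //.
all: by rewrite ?integral_right_bump_ge0 ?integral_left_bump_ge0.
Qed.

Lemma overlap_gt0P c mu nu : (0 < overlap c (mu, nu))%R <->
  (exists2 x, c < x & supp mu x)%R /\ (exists2 y, y < c & supp nu y)%R.
Proof.
have mu0 := integral_right_bump_ge0 c mu; have nu0 := integral_left_bump_ge0 c nu.
split=> [|[/right_bump_integral_gt0P mupos /left_bump_integral_gt0P nupos]].
  rewrite /overlap /= lt_neqAle mulr_ge0 ?trunc1_ge0 // andbT eq_sym.
  rewrite mulf_eq0 negb_or => /andP[mu_neq0 nu_neq0]; split.
    by apply/right_bump_integral_gt0P; rewrite -trunc1_gt0 // lt0r mu_neq0 trunc1_ge0.
  by apply/left_bump_integral_gt0P; rewrite -trunc1_gt0 // lt0r nu_neq0 trunc1_ge0.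
by rewrite /overlap mulr_gt0 // trunc1_gt0.
Qed.

Lemma ordered_overlap_eq0 c x : Rsup x.1 <= Linf x.2 -> overlap c x = 0%R.
Proof.
case: x => mu nu /= /Rsup_le_LinfP le_supp.
apply/eqP; rewrite eq_le overlap_ge0 andbT leNgt.
apply/negP => /overlap_gt0P[[x cx sx] [y yc sy]].
by have := le_supp _ _ sx sy; rewrite leNgt (lt_trans yc cx).
Qed.

Lemma overlap_eq0_ordered x :
  (forall q : rat, overlap (ratr q) x = 0%R) -> Rsup x.1 <= Linf x.2.
Proof.
case: x => mu nu overlap0; apply/Rsup_le_LinfP => x y sx sy.
rewrite leNgt; apply/negP => yx.
have [q] := rat_in_itvoo yx; rewrite in_itv /= => /andP[yq qx].
have := overlap0 q; apply/eqP; rewrite gt_eqF //.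
by apply/overlap_gt0P; split; [exists x|exists y].
Qed.

Lemma Mconv_cvg sp (mus : nat -> Meas R) mu (f : R -> R) :
  tem_test f -> bcont f -> Mconv sp mus mu ->
  \int[mus n]_x (f x)%:E @[n --> \oo] --> \int[mu]_x (f x)%:E.
Proof. by case: sp => /= tf bf; [case=> + _; apply|apply]. Qed.

Lemma bcontE_overlap sp c : bcontE sp (fun=> overlap c).
Proof.
split; first by exists 1%R => t x _ _; rewrite ger0_norm ?overlap_ge0 ?overlap_le1.
move=> t x ts xs _ _ _ _ [conv1 conv2]; apply: cvgM.
  apply: trunc1_cvg; first exact: integral_right_bump_ge0.
  by apply: Mconv_cvg conv1; [exact: tem_test_right_bump|exact: bcont_right_bump].
apply: trunc1_cvg; first exact: integral_left_bump_ge0.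
by apply: Mconv_cvg conv2; [exact: tem_test_left_bump|exact: bcont_left_bump].
Qed.

Definition overlap_mass c w : \bar R := pseudo_int (fun=> overlap c) w.

Lemma overlap_mass_ge0 c w : 0 <= overlap_mass c w.
Proof.
by apply: integral_ge0 => t _; rewrite lee_fin mulr_ge0 ?overlap_ge0 ?expR_ge0.
Qed.

Lemma ordered_overlap_mass c w : RL_ordered w -> overlap_mass c w = 0.
Proof.
move=> ord; set D := [set t : R | 0 <= t]%R.
have vanish t : (D `\ 0%R) t -> (overlap c (w t) * expR (- t))%:E = 0.
  by move=> [/= t0 /eqP tn0]; rewrite ordered_overlap_eq0 ?mul0r // ord // lt_def tn0.
have mD : measurable (D `\ 0%R).
  apply: measurableD => //; rewrite (_ : D = `[0%R, +oo[%classic) //.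
  by apply/seteqP; split => t /=; rewrite in_itv /= andbT.
rewrite /overlap_mass /pseudo_int -(integral_setD1 mD) ?integral0_eq //.
by apply: eq_measurable_fun (measurable_cst 0) => t /set_mem /vanish ->.
Qed.

Lemma integral_expR_gt0_at_right (g : R -> R) (t v : R) :
  (forall s, 0 <= s -> 0 <= g s)%R -> (0 <= t)%R -> (0 < v)%R ->
  (\forall s \near t^'+, v <= g s)%R ->
  0 < \int[lebesgue_measure]_(s in [set s : R | 0 <= s]%R) (g s * expR (- s))%:E.
Proof.
move=> g0 t0 v0 [del /= del0 gv]; set k := (v * expR (- (t + del)))%R.
have k0 : (0 < k)%R by rewrite mulr_gt0 ?expR_gt0.
pose I := `]t, (t + del)%R[%classic.
apply: (@lt_le_trans _ _ (\int[lebesgue_measure]_(s in I) (cst k%:E) s)).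
  rewrite /I integral_cst //= lebesgue_measure_itv /= lte_fin ltrDl del0.
  by rewrite -EFinD -EFinM lte_fin addrAC subrr add0r mulr_gt0.
apply: ge0_le_integral_subset => [s _|s /= s0|s].
- by rewrite lee_fin ltW.
- by rewrite lee_fin mulr_ge0 ?g0 ?expR_ge0.
rewrite /I /= in_itv /= => /andP[ts sd]; split; first lra.
rewrite lee_fin ler_pM ?(ltW v0) ?expR_ge0 ?ler_expR //; last lra.
by apply: gv; rewrite //= ltr_distlC; apply/andP; split; lra.
Qed.

Lemma cadlag_overlap_cvg_at_right sp c w t : cadlag sp w -> (0 <= t)%R ->
  overlap c (w s) @[s --> t^'+] --> overlap c (w t).
Proof.
move=> [Ew [rcont _]] t0; apply/cvg_at_rightP => u [tu ut].
have tu' k : (t <= u k)%R by exact/ltW.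
apply: ((bcontE_overlap sp c).2 t (w t) u (fun k => w (u k)) t0 (Ew t t0) _ ut
  (rcont t t0 u tu' ut)).
by move=> k; have uk0 := le_trans t0 (tu' k); split; [|exact: Ew].
Qed.

Lemma overlap_mass_eq0 sp c w : cadlag sp w -> overlap_mass c w = 0 ->
  forall t, (0 <= t)%R -> overlap c (w t) = 0%R.
Proof.
move=> cw mass0 t t0; apply/eqP; rewrite eq_le overlap_ge0 andbT leNgt.
apply/negP => pos; set v := (overlap c (w t) / 2)%R.
have v0 : (0 < v)%R by rewrite divr_gt0.
have near_v : (\forall s \near t^'+, v <= overlap c (w s))%R.
  by apply: (cvgr_ge _ (@cadlag_overlap_cvg_at_right sp c w t cw t0)); rewrite /v; lra.
have := @integral_expR_gt0_at_right _ _ _ (fun s _ => overlap_ge0 c (w s)) t0 v0 near_v.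
by move: mass0; rewrite /overlap_mass /pseudo_int /= => ->; rewrite ltxx.
Qed.

Definition overlap_functional c w : R := trunc1 (overlap_mass c w).

Lemma overlap_functional_ge0 c w : (0 <= overlap_functional c w)%R.
Proof. exact/trunc1_ge0/overlap_mass_ge0. Qed.

Lemma MZbcont_overlap_functional sp c : MZbcont sp (overlap_functional c).
Proof.
split.
  exists 1%R => w _; rewrite ger0_norm ?overlap_functional_ge0 //.
  exact/trunc1_le1/overlap_mass_ge0.
move=> ws w _ _ MZws; apply: trunc1_cvg; first exact: overlap_mass_ge0.
exact/MZws/bcontE_overlap.
Qed.

Lemma ordered_overlap_functional c w : RL_ordered w -> overlap_functional c w = 0%R.
Proof.
move=> /(ordered_overlap_mass c) mass0.
by rewrite /overlap_functional mass0 /trunc1 /mine lte01.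
Qed.

Lemma overlap_functional_eq0_ordered sp w : cadlag sp w ->
  (forall q : rat, overlap_functional (ratr q) w = 0%R) -> RL_ordered w.
Proof.
move=> cw functional0 t t0; apply: overlap_eq0_ordered => q.
apply: (overlap_mass_eq0 _ _ _ cw _ _ (ltW t0)); apply/eqP.
by rewrite -trunc1_eq0 ?overlap_mass_ge0 // -/(overlap_functional _ _) functional0.
Qed.

End overlap.

Section expectation.
Local Open Scope ereal_scope.
Context {R : realType} {d} {T : measurableType d} (P : probability T R).

Lemma integral_overlap_functional_eq0 sp (Y : T -> mpath R) (c : R) :
  Dprocess sp Y -> (\forall om \ae P, RL_ordered (Y om)) ->
  \int[P]_om (overlap_functional c (Y om))%:E = 0.
Proof.
move=> [_ mY] ordY.
rewrite (ae_eq_integral (cst 0)) ?integral0 //.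
- exact/measurable_EFinP/mY/MZbcont_overlap_functional.
- by apply: filterS ordY => om /(ordered_overlap_functional c) -> _.
Qed.

End expectation.

Theorem lemma5p3 (R : realType) (sp : bool) (d : measure_display)
  (T : measurableType d) (P : probability T R)
  (Xs : nat -> T -> mpath R) (X : T -> mpath R) :
  (forall n, Dprocess sp (Xs n)) -> Dprocess sp X ->
  MZweak_conv sp P Xs X ->
  (exists A, measurable A /\ P A = 1%E /\
     forall om, A om -> forall n, RL_ordered (Xs n om)) ->
  exists A, measurable A /\ P A = 1%E /\ forall om, A om -> RL_ordered (X om).
Proof.
move=> DXs DX wcX /ae_probabilityP ordXs; apply/ae_probabilityP.
have EX0 q : (\int[P]_om (overlap_functional (ratr q) (X om))%:E = 0)%E.
  have EXs0 n : (\int[P]_om (overlap_functional (ratr q) (Xs n om))%:E = 0)%E.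
    apply: integral_overlap_functional_eq0 (DXs n) _.
    by apply: filterS ordXs => om; apply.
  have := wcX _ (MZbcont_overlap_functional sp (ratr q)).
  by rewrite (funext EXs0) => /cvg_lim <- //; rewrite lim_cst.
have Xae q : \forall om \ae P, overlap_functional (ratr q) (X om) = 0%R.
  apply: ge0_integral_eq0_ae (EX0 q) => [|om]; last exact: overlap_functional_ge0.
  exact/DX.2/MZbcont_overlap_functional.
apply: filterS (ae_forall_countable Xae) => om.
exact: overlap_functional_eq0_ordered (DX.1 om).
Qed.
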